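(* Let $B$ be a finite set (of ''bath spins''), and introduce commuting indeterminates $b_{i,j}=b_{j,i}$ for distinct $i,j\in B$. For every subset $\mathcal S\subseteq B$ let $L_{\mathcal S}$ be a formal power series in the variables $\{b_{i,j}: i,j\in\mathcal S,\ i\neq j\}$ (with complex coefficients, which may depend on additional parameters such as a time $t$) whose constant term is nonzero. Define $\tilde L_{\mathcal S}$ recursively for all $\mathcal S\subseteq B$ by $$\tilde L_{\mathcal S}=L_{\mathcal S}\Big/\prod_{\mathcal C\subsetneq \mathcal S}\tilde L_{\mathcal C},$$ so that $L_{\mathcal S}=\prod_{\mathcal C\subseteq\mathcal S}\tilde L_{\mathcal C}$. Suppose the family $(L_{\mathcal S})$ is factorable under disconnected interactions, i.e. for every $\mathcal S\subseteq B$ and all subsets $\mathcal X,\mathcal Y\subseteq\mathcal S$ with $\mathcal X\cup\mathcal Y=\mathcal S$ and $\mathcal X\cap\mathcal Y=\emptyset$, setting $b_{i,j}=0$ for all $i\in\mathcal X$, $j\in\mathcal Y$ in $L_{\mathcal S}$ yields $L_{\mathcal X}L_{\mathcal Y}$. Then for every $\mathcal C\subseteq B$, every non-constant monomial appearing (with nonzero coefficient) in the power series $\tilde L_{\mathcal C}$ has the following property: the graph with vertex set $\mathcal C$ and with an edge $\{i,j\}$ for each variable $b_{i,j}$ occurring in that monomial is connected. Equivalently, no non-constant term of $\tilde L_{\mathcal C}$ can be factored into parts involving disjoint non-empty sets of spins of $\mathcal C$.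
   Context: The quotient and products are taken in the ring of formal power series; they are well defined because every $L_{\mathcal S}$, and hence every $\tilde L_{\mathcal S}$, has nonzero constant term and is thus invertible. Since $L_{\mathcal S}$ involves only variables indexed by pairs in $\mathcal S$, setting the cross variables to zero gives a series in variables indexed within $\mathcal X$ and within $\mathcal Y$, which is compared with the product $L_{\mathcal X}L_{\mathcal Y}$. *)

From HB Require Import structures.
From mathcomp Require Import all_boot all_order all_algebra.
Set Implicit Arguments. Unset Strict Implicit. Unset Printing Implicit Defensive.
Import Order.TTheory GRing.Theory Num.Theory.
Local Open Scope ring_scope.

(* unordered pairs {i,j}, i <> j, of elements of B: the indeterminates b_{i,j} *)
Definition edge (B : finType) := {e : {set B} | (#|e| == 2)%N}.

(* monomials = exponent vectors *)
Definition mono (B : finType) := {ffun edge B -> nat}.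
Definition mono0 (B : finType) : mono B := [ffun _ => 0%N].

(* formal power series = coefficient functions *)
Definition series (R : fieldType) (B : finType) := mono B -> R.

Definition ps_one (R : fieldType) (B : finType) : series R B :=
  fun m => (m == mono0 B)%:R.

(* Cauchy product: (f*g)_m = sum_{d1 + d2 = m} f_{d1} g_{d2} *)
Definition ps_mul (R : fieldType) (B : finType) (f g : series R B) : series R B :=
  fun m => \sum_(d : {dffun forall e : edge B, 'I_(m e).+1})
             f [ffun e => nat_of_ord (d e)] * g [ffun e => (m e - d e)%N].

Definition involves_only (R : fieldType) (B : finType) (S : {set B}) (f : series R B) :=
  forall m, f m != 0 -> forall e : edge B, (m e != 0)%N -> val e \subset S.

Definition cross (B : finType) (X Y : {set B}) (e : edge B) : bool :=
  [exists i in X, exists j in Y, val e == [set i; j]].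

(* substitute b_{i,j} = 0 for all i in X, j in Y *)
Definition kill_cross (R : fieldType) (B : finType) (X Y : {set B}) (f : series R B)
  : series R B :=
  fun m => if [exists e, (m e != 0)%N && cross X Y e] then 0 else f m.

Definition mono_graph (B : finType) (C : {set B}) (m : mono B) : rel B :=
  fun i j => [&& i \in C, j \in C &
              [exists e : edge B, (m e != 0)%N && (val e == [set i; j])]].

Definition mono_connected (B : finType) (C : {set B}) (m : mono B) : Prop :=
  forall i j, i \in C -> j \in C -> connect (mono_graph C m) i j.

From HB Require Import structures.
From mathcomp Require Import all_boot all_order all_algebra.
From Stdlib Require Import FunctionalExtensionality.
From mathcomp Require Import zify.
Set Implicit Arguments. Unset Strict Implicit. Unset Printing Implicit Defensive.
Import Order.TTheory GRing.Theory Num.Theory.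
Local Open Scope ring_scope.

(* First, by induction on #|D| and cancellation of the invertible factor
   prod_(C proper in D) Lt C in L D = prod_(C in D) Lt C, every Lt D involves
   only the variables of D.  Now split C into nonempty disjoint X, Y and kill
   the cross variables in L C = prod_(D in C) Lt D.  Factors with D inside X or
   inside Y are untouched and recombine, by factorability, into L X * L Y; by
   induction the remaining "mixed" factors D <> C become constants.  Cancelling
   L X * L Y leaves (Lt C with cross variables killed) * (invertible constant)
   = Lt set0, a constant.  Hence every non-constant monomial of Lt C contains a
   variable crossing any such partition of C, i.e. its graph is connected. *)

Section Monomials.
Variable B : finType.
Implicit Types a m : mono B.

Definition mono_le a m := [forall e, a e <= m e]%N.
Definition mono_sub m a : mono B := [ffun e => m e - a e]%N.
Definition mono_add a m : mono B := [ffun e => a e + m e]%N.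
Definition mono_deg m := (\sum_e m e)%N.
Definition mono_max m := (\max_e m e)%N.

Lemma mono_leP a m : reflect (forall e, a e <= m e)%N (mono_le a m).
Proof. exact: forallP. Qed.

Lemma mono0_le m : mono_le (mono0 B) m.
Proof. by apply/mono_leP => e; rewrite ffunE. Qed.

Lemma mono_le0 m : mono_le m (mono0 B) -> m = mono0 B.
Proof.
by move/mono_leP => le_m0; apply/ffunP => e; have := le_m0 e; rewrite ffunE leqn0 => /eqP.
Qed.

Lemma mono_sub_le m a : mono_le (mono_sub m a) m.
Proof. by apply/mono_leP => e; rewrite ffunE leq_subr. Qed.

Lemma mono_subK m a : mono_le a m -> mono_sub m (mono_sub m a) = a.
Proof. by move/mono_leP => le_am; apply/ffunP => e; rewrite !ffunE subKn. Qed.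

Lemma mono_max_ge m e : (m e <= mono_max m)%N.
Proof. exact: leq_bigmax. Qed.

Lemma mono_neq0 m : m != mono0 B -> exists e, m e != 0%N.
Proof.
move=> m_neq0; apply/existsP; apply: contraR m_neq0 => /existsPn m0.
by apply/eqP/ffunP => e; apply/eqP; rewrite ffunE -[_ == _]negbK m0.
Qed.

Lemma mono_deg_sub m a :
  mono_le a m -> a != mono0 B -> (mono_deg (mono_sub m a) < mono_deg m)%N.
Proof.
move=> /mono_leP le_am /mono_neq0 [e a_e].
have -> : mono_deg m = (mono_deg (mono_sub m a) + mono_deg a)%N.
  by rewrite /mono_deg -big_split; apply: eq_bigr => e' _; rewrite ffunE /= subnK.
by rewrite -[X in (X < _)%N]addn0 ltn_add2l /mono_deg (bigD1 e) //= addn_gt0 lt0n a_e.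
Qed.

(* A fixed finite index type for the Cauchy sums, whose native domain in
   [ps_mul] depends on the monomial. *)
Definition bmono N := {ffun edge B -> 'I_N.+1}.
Definition bval N (x : bmono N) : mono B := [ffun e => nat_of_ord (x e)].
Definition bmono_of N m : bmono N := [ffun e => inord (m e)].

Lemma bval_le N (x : bmono N) e : (bval x e <= N)%N.
Proof. by rewrite ffunE -ltnS. Qed.

Lemma bvalK N : cancel (@bval N) (bmono_of N).
Proof. by move=> x; apply/ffunP => e; rewrite !ffunE inord_val. Qed.

Lemma bmono_ofK N m : (forall e, m e <= N)%N -> bval (bmono_of N m) = m.
Proof. by move=> le_mN; apply/ffunP => e; rewrite !ffunE inordK // ltnS. Qed.

Lemma bmono_of_leK N m a :
  (forall e, m e <= N)%N -> mono_le a m -> bval (bmono_of N a) = a.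
Proof. by move=> le_mN /mono_leP le_am; apply: bmono_ofK => e; apply: leq_trans (le_mN e). Qed.

End Monomials.

Section Series.
Variables (R : fieldType) (B : finType).
Implicit Types (f g h : series R B) (m : mono B).

Lemma ps_mulE N f g m : (forall e, m e <= N)%N ->
  ps_mul f g m =
  \sum_(x : bmono B N | mono_le (bval x) m) f (bval x) * g (mono_sub m (bval x)).
Proof.
move=> le_mN.
pose J := {dffun forall e : edge B, 'I_(m e).+1}.
pose toJ (x : bmono B N) : J := finfun (fun e => inord (x e) : 'I_(m e).+1).
have le_dm (d : J) e : (d e <= m e)%N by rewrite -ltnS.
have valJ (d : J) : bval (bmono_of N [ffun e => nat_of_ord (d e)]) = [ffun e => nat_of_ord (d e)].
  by apply: bmono_ofK => e; rewrite ffunE (leq_trans (le_dm d e)).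
rewrite (reindex_onto (fun d : J => bmono_of N [ffun e => nat_of_ord (d e)]) toJ); last first.
  move=> x /mono_leP le_xm; rewrite -[RHS]bvalK; congr bmono_of.
  by apply/ffunP => e; rewrite !ffunE inordK // ltnS; have := le_xm e; rewrite ffunE.
rewrite /ps_mul; apply: eq_big => [d|d _]; last first.
  by rewrite valJ; congr (_ * g _); apply/ffunP => e; rewrite !ffunE.
rewrite valJ; apply/esym/andP; split; first by apply/mono_leP => e; rewrite ffunE.
apply/eqP/ffunP => e; apply: val_inj; rewrite ffunE /= !ffunE.
by rewrite !inordK // ltnS (leq_trans (le_dm d e)).
Qed.

Lemma ps_mul_split N f g m : (forall e, m e <= N)%N ->
  ps_mul f g m = f (mono0 B) * g m +
  \sum_(x : bmono B N | mono_le (bval x) m && (bval x != mono0 B))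
     f (bval x) * g (mono_sub m (bval x)).
Proof.
move=> le_mN; rewrite (ps_mulE _ _ le_mN).
have val0 : bval (bmono_of N (mono0 B)) = mono0 B by apply: bmono_of_leK (mono0_le m).
rewrite (bigD1 (bmono_of N (mono0 B))) /=; last by rewrite val0 mono0_le.
rewrite val0; congr (_ * g _ + _); first by apply/ffunP => e; rewrite !ffunE subn0.
apply: eq_bigl => x; congr (_ && _); apply/negb_inj; rewrite !negbK.
by apply/eqP/eqP => [-> | <-]; rewrite ?bvalK.
Qed.

Lemma ps_mul1 : left_id (@ps_one R B) (@ps_mul R B).
Proof.
move=> g; apply: functional_extensionality => m.
rewrite (ps_mul_split _ _ (@mono_max_ge B m)) /ps_one eqxx mul1r big1 ?addr0 //.
by move=> x /andP[_ /negbTE ->]; rewrite mul0r.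
Qed.

Lemma ps_mulC : commutative (@ps_mul R B).
Proof.
move=> f g; apply: functional_extensionality => m.
have le_mN := @mono_max_ge B m; rewrite !(ps_mulE _ _ le_mN).
pose flip (x : bmono B (mono_max m)) :=
  if mono_le (bval x) m then bmono_of _ (mono_sub m (bval x)) else x.
have flipK : involutive flip.
  move=> x; rewrite /flip; have [le_xm | /negbTE nle_xm] := boolP (mono_le (bval x) m).
    by rewrite (bmono_of_leK le_mN) ?mono_sub_le // mono_subK ?bvalK.
  by rewrite !nle_xm.
rewrite (reindex_inj (can_inj flipK)); apply: eq_big => x; rewrite /flip;
  have [le_xm | /negbTE nle_xm] := boolP (mono_le (bval x) m); rewrite ?nle_xm //;
  rewrite (bmono_of_leK le_mN) ?mono_sub_le //.
by rewrite mono_subK // mulrC.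
Qed.

Lemma ps_mulA : associative (@ps_mul R B).
Proof.
move=> f g h; apply: functional_extensionality => m; symmetry.
set N := mono_max m; have le_mN : forall e, (m e <= N)%N := @mono_max_ge B m.
have le_N a : mono_le a m -> forall e, (a e <= N)%N.
  by move=> /mono_leP le_am e; apply: leq_trans (le_am e) (le_mN e).
rewrite !(ps_mulE _ _ le_mN).
under eq_bigr => a le_am do rewrite (ps_mulE _ _ (le_N _ le_am)) mulr_suml.
under [RHS]eq_bigr => b _ do rewrite (ps_mulE _ _ (le_N _ (mono_sub_le m _))) mulr_sumr.
rewrite (exchange_big_dep (fun b : bmono B N => mono_le (bval b) m)); last first.
  move=> a b /mono_leP le_am /mono_leP le_ba.
  by apply/mono_leP => e; apply: leq_trans (le_ba e) (le_am e).
apply: eq_bigr => b /mono_leP le_bm.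
have bval_add (c : bmono B N) : mono_le (bval c) (mono_sub m (bval b)) ->
    bval (bmono_of N (mono_add (bval b) (bval c))) = mono_add (bval b) (bval c).
  move=> /mono_leP le_c; apply: bmono_ofK => e; apply: leq_trans (le_mN e).
  by have := le_c e; have := le_bm e; rewrite !ffunE; lia.
have bval_sub (a : bmono B N) :
    bval (bmono_of N (mono_sub (bval a) (bval b))) = mono_sub (bval a) (bval b).
  by apply: bmono_ofK => e; rewrite ffunE; apply: leq_trans (leq_subr _ _) (bval_le _ _).
(* The inner sum over c is reindexed by a = b + c. *)
rewrite [RHS](reindex_onto (fun a => bmono_of N (mono_sub (bval a) (bval b)))
                           (fun c => bmono_of N (mono_add (bval b) (bval c)))); last first.
  by move=> c le_c; rewrite bval_add // -[RHS]bvalK; congr bmono_of; apply/ffunP => e;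
    rewrite !ffunE addKn.
apply: eq_big => [a | a /andP[/mono_leP le_am /mono_leP le_ba]]; last first.
  rewrite bval_sub mulrA; congr (_ * _ * h _); apply/ffunP => e.
  by have := le_am e; have := le_ba e; rewrite !ffunE; lia.
rewrite bval_sub; apply/idP/andP => [/andP[/mono_leP le_am /mono_leP le_ba] | []].
  split; first by apply/mono_leP => e; have := le_am e; have := le_ba e; rewrite !ffunE; lia.
  rewrite -[X in _ == X]bvalK; apply/eqP; congr bmono_of; apply/ffunP => e.
  by have := le_ba e; rewrite !ffunE; lia.
move=> /mono_leP le_abm /eqP <-.
have le_bab e : (mono_add (bval b) (mono_sub (bval a) (bval b)) e <= m e)%N.
  by have := le_abm e; have := le_bm e; rewrite !ffunE; lia.
rewrite bmono_ofK => [|e]; last exact: leq_trans (le_bab e) (le_mN e).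
by apply/andP; split; apply/mono_leP => // e; rewrite !ffunE leq_addr.
Qed.

Lemma ps_mul_mono0 f g : ps_mul f g (mono0 B) = f (mono0 B) * g (mono0 B).
Proof.
rewrite (@ps_mul_split 0) => [|e]; last by rewrite ffunE.
by rewrite big_pred0 ?addr0 // => x; apply/negbTE/negP => /andP[/mono_le0 ->]; rewrite eqxx.
Qed.

Lemma ps_mulI f : f (mono0 B) != 0 -> injective (ps_mul f).
Proof.
move=> f0 g h fg_fh; apply: functional_extensionality => m.
have [n] := ubnP (mono_deg m); elim: n m => // n IH m /ltnSE le_mn.
have := congr1 (fun F => F m) fg_fh; rewrite /= !(ps_mul_split _ _ (@mono_max_ge B m)).
under eq_bigr => x /andP[le_xm x_neq0].
  rewrite IH; first over.
  exact: leq_trans (mono_deg_sub le_xm x_neq0) le_mn.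
by move/addIr/(mulfI f0).
Qed.

Definition ps_constant f := forall m, m != mono0 B -> f m = 0.

Lemma ps_mul_constl f g m : ps_constant f -> ps_mul f g m = f (mono0 B) * g m.
Proof.
move=> f_const; rewrite (ps_mul_split _ _ (@mono_max_ge B m)).
by rewrite big1 ?addr0 // => x /andP[_ x_neq0]; rewrite f_const ?mul0r.
Qed.

Lemma ps_constant1 : ps_constant (@ps_one R B).
Proof. by move=> m /negbTE m_neq0; rewrite /ps_one m_neq0. Qed.

Lemma ps_constant_mul f g : ps_constant f -> ps_constant g -> ps_constant (ps_mul f g).
Proof. by move=> f_const g_const m m_neq0; rewrite ps_mul_constl // g_const ?mulr0. Qed.

Lemma ps_constant_mulr f g :
  ps_constant g -> g (mono0 B) != 0 -> ps_constant (ps_mul f g) -> ps_constant f.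
Proof.
move=> g_const g0 fg_const m m_neq0; apply/eqP.
have /eqP := fg_const m m_neq0.
by rewrite ps_mulC ps_mul_constl // mulf_eq0 (negbTE g0).
Qed.

Lemma involves_only_set0 f : involves_only set0 f -> ps_constant f.
Proof.
move=> f_set0 m /mono_neq0 [e m_e]; apply/eqP; apply: contraT => fm_neq0.
by have := f_set0 m fm_neq0 e m_e; rewrite subset0 => /eqP e0; move: (valP e); rewrite e0 cards0.
Qed.

(* [kill_cross X Y] is [kill (cross X Y)] by definition. *)
Definition kill (P : pred (edge B)) f : series R B :=
  fun m => if [exists e, (m e != 0)%N && P e] then 0 else f m.

Lemma kill_id P f m : ~~ [exists e, (m e != 0)%N && P e] -> kill P f m = f m.
Proof. by rewrite /kill => /negbTE ->. Qed.

Lemma kill_mono0 P f : kill P f (mono0 B) = f (mono0 B).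
Proof. by rewrite kill_id //; apply/existsPn => e; rewrite ffunE. Qed.

Lemma kill_mul P f g : kill P (ps_mul f g) = ps_mul (kill P f) (kill P g).
Proof.
apply: functional_extensionality => m; rewrite (ps_mulE _ _ (@mono_max_ge B m)).
have [/existsP[e /andP[m_e Pe]] | no_killed] := boolP [exists e, (m e != 0)%N && P e].
  rewrite {1}/kill ifT; last by apply/existsP; exists e; rewrite m_e.
  apply/esym/big1 => x _; have [x_e | /negPn/eqP x_e] := boolP (bval x e != 0)%N.
    by rewrite /kill ifT ?mul0r //; apply/existsP; exists e; rewrite x_e.
  rewrite [kill P g _]/kill ifT ?mulr0 //.
  by apply/existsP; exists e; rewrite Pe andbT ffunE x_e subn0.
have below a : (forall e, a e <= m e)%N -> ~~ [exists e, (a e != 0)%N && P e].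
  move=> le_am; apply: contra no_killed => /existsP[e /andP[a_e Pe]].
  by apply/existsP; exists e; rewrite Pe andbT -lt0n (leq_trans _ (le_am e)) // lt0n.
rewrite kill_id // (ps_mulE _ _ (@mono_max_ge B m)).
apply: eq_bigr => x /mono_leP le_xm; rewrite !kill_id ?below //.
by move=> e; rewrite ffunE leq_subr.
Qed.

Lemma kill_one P : kill P (@ps_one R B) = @ps_one R B.
Proof.
apply: functional_extensionality => m; rewrite /kill.
case: ifP => // /existsP[e /andP[m_e _]]; rewrite /ps_one.
by case: eqP => // m0; move: m_e; rewrite m0 ffunE.
Qed.

Lemma kill_involves_only (P : pred (edge B)) (S : {set B}) f : involves_only S f ->
  (forall e : edge B, val e \subset S -> ~~ P e) -> kill P f = f.
Proof.
move=> f_S P_S; apply: functional_extensionality => m; rewrite /kill.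
case: ifP => // /existsP[e /andP[m_e Pe]]; apply/esym/eqP; apply: contraT => fm_neq0.
by rewrite (negbTE (P_S e (f_S m fm_neq0 e m_e))) in Pe.
Qed.

Lemma involves_only_kill (S : {set B}) f :
  kill (fun e => ~~ (val e \subset S)) f = f -> involves_only S f.
Proof.
move=> kill_f m fm_neq0 e m_e; move: fm_neq0; rewrite -kill_f /kill.
by case: ifPn => [_|/existsPn/(_ e)]; rewrite ?eqxx // m_e negbK.
Qed.

Lemma kill_constant_sub (P Q : pred (edge B)) f : subpred P Q ->
  ps_constant (kill P f) -> ps_constant (kill Q f).
Proof.
move=> sub_PQ killP_const m m_neq0; rewrite /kill; case: ifPn => // no_Q.
rewrite -(killP_const m m_neq0) kill_id //; apply: contra no_Q => /existsP[e /andP[m_e Pe]].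
by apply/existsP; exists e; rewrite m_e sub_PQ.
Qed.

End Series.

HB.instance Definition _ (R : fieldType) (B : finType) :=
  Monoid.isComLaw.Build (series R B) (@ps_one R B) (@ps_mul R B)
    (@ps_mulA R B) (@ps_mulC R B) (@ps_mul1 R B).

Section ProductsOfSeries.
Variables (R : fieldType) (B : finType).
Local Notation psmul := (@ps_mul R B).
Local Notation ps1 := (@ps_one R B).

Lemma ps_prod_mono0 (I : Type) (r : seq I) (P : pred I) (F : I -> series R B) :
  (\big[psmul/ps1]_(i <- r | P i) F i) (mono0 B) = \prod_(i <- r | P i) F i (mono0 B).
Proof.
apply: (big_morph (fun f : series R B => f (mono0 B))); first exact: ps_mul_mono0.
by rewrite /ps_one eqxx.
Qed.

Lemma kill_prod (Pe : pred (edge B)) (I : Type) (r : seq I) (P : pred I)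
    (F : I -> series R B) :
  kill Pe (\big[psmul/ps1]_(i <- r | P i) F i) =
  \big[psmul/ps1]_(i <- r | P i) kill Pe (F i).
Proof. exact: (big_morph (kill Pe) (@kill_mul R B Pe) (kill_one R Pe)). Qed.

End ProductsOfSeries.

Section SubsetPartition.
Variables (B : finType) (X Y : {set B}).
Hypothesis XY0 : X :&: Y = set0.

Lemma big_subset_partition (T : Type) (idx : T) (op : Monoid.com_law idx)
    (F : {set B} -> T) :
  op (\big[op/idx]_(D : {set B} | D \subset X :|: Y) F D) (F set0) =
  op (op (\big[op/idx]_(D : {set B} | D \subset X) F D)
         (\big[op/idx]_(D : {set B} | D \subset Y) F D))
     (\big[op/idx]_(D : {set B} | [&& D \subset X :|: Y, ~~ (D \subset X) & ~~ (D \subset Y)]) F D).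
Proof.
rewrite (bigID (fun D : {set B} => D \subset X)) /=.
rewrite [X in op (op _ X) _](bigID (fun D : {set B} => D \subset Y)) /=.
have -> : \big[op/idx]_(D : {set B} | (D \subset X :|: Y) && (D \subset X)) F D =
          \big[op/idx]_(D : {set B} | D \subset X) F D.
  by apply: eq_bigl => D; apply: andb_idl => /subset_trans; apply; apply: subsetUl.
rewrite [\big[op/idx]_(D : {set B} | D \subset Y) F D](bigD1 set0) ?sub0set //=.
have -> : \big[op/idx]_(D : {set B} | (D \subset Y) && (D != set0)) F D =
          \big[op/idx]_(D : {set B} | [&& D \subset X :|: Y, ~~ (D \subset X) & D \subset Y]) F D.
  apply: eq_bigl => D; case DY: (D \subset Y); rewrite ?andbF //= andbT.
  rewrite (subset_trans DY (subsetUr X Y)) -subset0 -XY0 subsetI DY andbT.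
  by case: (D \subset X); rewrite ?andbT.
rewrite -!Monoid.mulmA; congr (op _ _).
rewrite [RHS]Monoid.mulmCA (Monoid.mulmC _ (F set0)).
by congr (op _ (op _ _)); apply: eq_bigl => D; rewrite andbA.
Qed.

Lemma cross_subset (X' Y' : {set B}) :
  X' \subset X -> Y' \subset Y -> subpred (cross X' Y') (cross X Y).
Proof.
move=> /subsetP sX /subsetP sY e /existsP[i /andP[Xi /existsP[j /andP[Yj e_ij]]]].
by apply/existsP; exists i; rewrite sX //=; apply/existsP; exists j; rewrite sY.
Qed.

Lemma cross_side (D : {set B}) (e : edge B) :
  (D \subset X) || (D \subset Y) -> val e \subset D -> ~~ cross X Y e.
Proof.
move=> D_side e_D; apply/existsP => -[i /andP[Xi /existsP[j /andP[Yj /eqP e_ij]]]].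
have /subsetP ij_D : [set i; j] \subset D by rewrite -e_ij.
have [iD jD] : i \in D /\ j \in D by split; apply: ij_D; rewrite !inE eqxx ?orbT.
have disj k : k \in X -> k \in Y -> False.
  by move=> kX kY; have := in_set0 k; rewrite -XY0 inE kX kY.
by case/orP: D_side => /subsetP sD; [apply: (disj j) | apply: (disj i)]; rewrite // sD.
Qed.

End SubsetPartition.

Definition mono_component (B : finType) (C : {set B}) (m : mono B) (i : B) : {set B} :=
  [set k in C | connect (mono_graph C m) i k].

Lemma mono_component_no_cross (B : finType) (C : {set B}) (m : mono B) (i : B) :
  ~~ [exists e, (m e != 0)%N && cross (mono_component C m i) (C :\: mono_component C m i) e].
Proof.
apply/existsPn => e; apply/negP => /andP[m_e /existsP[a /andP[Xa /existsP[b /andP[Yb e_ab]]]]].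
move: Xa Yb; rewrite !inE => /andP[aC ia] /andP[/negP Xb bC]; apply: Xb.
rewrite bC; apply: connect_trans ia (connect1 _).
by rewrite /mono_graph aC bC; apply/existsP; exists e; rewrite m_e.
Qed.

Section Connectedness.
Variables (R : fieldType) (B : finType) (L Lt : {set B} -> series R B).
Local Notation psmul := (@ps_mul R B).
Local Notation ps1 := (@ps_one R B).
Hypothesis L_vars : forall S, involves_only S (L S).
Hypothesis L_mono0 : forall S, L S (mono0 B) != 0.
Hypothesis L_fact : forall S X Y : {set B}, X :|: Y = S -> X :&: Y = set0 ->
  forall m, kill_cross X Y (L S) m = ps_mul (L X) (L Y) m.
Hypothesis L_Lt : forall S m, L S m = (\big[psmul/ps1]_(C : {set B} | C \subset S) Lt C) m.

Lemma L_prod S : L S = \big[psmul/ps1]_(C : {set B} | C \subset S) Lt C.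
Proof. by apply: functional_extensionality => m; apply: L_Lt. Qed.

Lemma Lt_mono0 D : Lt D (mono0 B) != 0.
Proof.
apply: contraNneq (L_mono0 D) => Lt0.
by rewrite L_prod ps_prod_mono0 (bigD1 D) //= Lt0 mul0r.
Qed.

Lemma ps_prod_Lt_mono0 (P : pred {set B}) :
  (\big[psmul/ps1]_(D | P D) Lt D) (mono0 B) != 0.
Proof. by rewrite ps_prod_mono0; apply/prodf_neq0 => D _; apply: Lt_mono0. Qed.

Lemma Lt_involves_only D : involves_only D (Lt D).
Proof.
have [n] := ubnP #|D|; elim: n D => // n IH D /ltnSE le_Dn.
pose outside := fun e : edge B => ~~ (val e \subset D).
have kill_L : kill outside (L D) = L D.
  by apply: kill_involves_only (@L_vars D) _ => e; rewrite negbK.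
have kill_proper :
    \big[psmul/ps1]_(C : {set B} | (C \subset D) && (C != D)) kill outside (Lt C) =
    \big[psmul/ps1]_(C : {set B} | (C \subset D) && (C != D)) Lt C.
  apply: eq_bigr => C /andP[C_D C_neq_D].
  apply: kill_involves_only (IH _ _) _ => [|e]; last by rewrite negbK => /subset_trans; apply.
  by apply: leq_trans le_Dn; apply: proper_card; rewrite properEneq C_neq_D.
move: kill_L; rewrite L_prod kill_prod (bigD1 D) // [in RHS](bigD1 D) //= kill_proper.
move=> kill_Lt; apply/involves_only_kill.
apply: (ps_mulI (ps_prod_Lt_mono0 (fun C => (C \subset D) && (C != D)))).
by rewrite ps_mulC kill_Lt ps_mulC.
Qed.

Lemma kill_cross_Lt_side (X Y D : {set B}) : X :&: Y = set0 ->
  (D \subset X) || (D \subset Y) -> kill (cross X Y) (Lt D) = Lt D.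
Proof.
move=> XY0 D_side; apply: kill_involves_only (@Lt_involves_only D) _ => e.
exact: cross_side.
Qed.

Lemma kill_cross_Lt_mixed (X Y : {set B}) : X :&: Y = set0 ->
  \big[psmul/ps1]_(D : {set B} |
      [&& D \subset X :|: Y, ~~ (D \subset X) & ~~ (D \subset Y)])
     kill (cross X Y) (Lt D) = Lt set0.
Proof.
move=> XY0; apply/esym.
(* Cancel [L X * L Y] from the factorization of the killed [L (X :|: Y)]. *)
have LXY0 : ps_mul (L X) (L Y) (mono0 B) != 0 by rewrite ps_mul_mono0 mulf_neq0.
apply: (ps_mulI LXY0).
have side (D : {set B}) : (D \subset X) || (D \subset Y) -> kill (cross X Y) (Lt D) = Lt D.
  exact: kill_cross_Lt_side.
have LXY : ps_mul (L X) (L Y) = kill (cross X Y) (L (X :|: Y)).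
  by apply: functional_extensionality => m; rewrite -(L_fact (erefl (X :|: Y)) XY0).
have := @big_subset_partition B X Y XY0 _ _ psmul (fun D : {set B} => kill (cross X Y) (Lt D)).
rewrite -kill_prod -L_prod -LXY side ?sub0set // => ->.
rewrite !L_prod; congr (psmul (psmul _ _) _).
all: by apply: eq_bigr => D D_side; rewrite side ?D_side ?orbT.
Qed.

Lemma kill_cross_Lt_constant (X Y : {set B}) : X :&: Y = set0 -> X != set0 -> Y != set0 ->
  ps_constant (kill (cross X Y) (Lt (X :|: Y))).
Proof.
have [n] := ubnP #|X :|: Y|; elim: n X Y => // n IH X Y /ltnSE le_n XY0 X_neq0 Y_neq0.
have not_sub_other (Z W : {set B}) : Z :&: W = set0 -> W != set0 -> ~~ (Z :|: W \subset Z).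
  move=> ZW0 /set0Pn[w Ww]; apply/subsetPn; exists w; rewrite ?inE ?Ww ?orbT //.
  by apply: contra_eqN ZW0 => Zw; apply/set0Pn; exists w; rewrite inE Zw.
have mixed_XY : [&& X :|: Y \subset X :|: Y, ~~ (X :|: Y \subset X) & ~~ (X :|: Y \subset Y)].
  by rewrite subxx not_sub_other // setUC not_sub_other // setIC.
have mixed_const (D : {set B}) :
    [&& D \subset X :|: Y, ~~ (D \subset X) & ~~ (D \subset Y)] && (D != X :|: Y) ->
    ps_constant (kill (cross X Y) (Lt D)).
  move=> /andP[/and3P[D_XY D_X D_Y] D_neq].
  apply: (kill_constant_sub (cross_subset (subsetIl X D) (subsetIl Y D))).
  have DXY : (X :&: D) :|: (Y :&: D) = D by rewrite -setIUl; apply/setIidPr.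
  rewrite -[Z in Lt Z]DXY; apply: IH.
  - by rewrite DXY; apply: leq_trans le_n; apply: proper_card; rewrite properEneq D_neq.
  - by rewrite setIACA XY0 set0I.
  - case/subsetPn: D_Y => k Dk Yk; apply/set0Pn; exists k; rewrite inE Dk andbT.
    by move/subsetP: D_XY => /(_ k Dk); rewrite inE (negbTE Yk) orbF.
  - case/subsetPn: D_X => k Dk Xk; apply/set0Pn; exists k; rewrite inE Dk andbT.
    by move/subsetP: D_XY => /(_ k Dk); rewrite inE (negbTE Xk).
have := kill_cross_Lt_mixed XY0; rewrite (bigD1 (X :|: Y)) //=.
set M := \big[psmul/ps1]_(D | _) _ => Lt0_split.
apply: (@ps_constant_mulr _ _ _ M).
- by apply: (big_ind (@ps_constant R B)); [exact: ps_constant1 | exact: ps_constant_mul |].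
- by rewrite /M ps_prod_mono0; apply/prodf_neq0 => D _; rewrite kill_mono0 Lt_mono0.
- by rewrite Lt0_split; apply: involves_only_set0; apply: Lt_involves_only.
Qed.

End Connectedness.

Theorem lemma1 (R : fieldType) (B : finType)
  (L Lt : {set B} -> series R B)
  (HLvars : forall S, involves_only S (L S))
  (HLconst : forall S, L S (mono0 B) != 0)
  (Hfact : forall S X Y : {set B}, X :|: Y = S -> X :&: Y = set0 ->
     forall m, kill_cross X Y (L S) m = ps_mul (L X) (L Y) m)
  (HLt : forall S m,
     L S m = (\big[@ps_mul R B/@ps_one R B]_(C : {set B} | C \subset S) Lt C) m) :
  forall (C : {set B}) (m : mono B), m != mono0 B -> Lt C m != 0 ->
    (forall e : edge B, (m e != 0)%N -> val e \subset C) /\ mono_connected C m.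
Proof.
move=> C m m_neq0 Ltm_neq0; split; first exact: (Lt_involves_only HLvars HLconst HLt) Ltm_neq0.
move=> i j iC jC; apply/idPn => not_ij.
pose X := mono_component C m i.
have XC : X \subset C by apply/subsetP => k; rewrite inE => /andP[].
have XY : X :|: (C :\: X) = C by rewrite -[RHS](setID C X) (setIidPr XC).
have XY0 : X :&: (C :\: X) = set0 by rewrite setDE setICA setICr setI0.
have X_neq0 : X != set0 by apply/set0Pn; exists i; rewrite inE iC connect0.
have Y_neq0 : C :\: X != set0 by apply/set0Pn; exists j; rewrite !inE jC (negbTE not_ij).
have := kill_cross_Lt_constant HLvars HLconst Hfact HLt XY0 X_neq0 Y_neq0 m_neq0.
by rewrite XY kill_id ?mono_component_no_cross // => Ltm0; rewrite Ltm0 eqxx in Ltm_neq0.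
Qed.
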